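(* There is an absolute constant $c$ such that the following holds. Let $G$ be a simple graph given as a stream of $m$ distinct edges, with $W\ge m$ wedges and $T\ge1$ triangles. Fix $\beta\in(0,1)$, let $\beta'=\beta/5$, and let $\mathcal{R}_m=(r_1,\dots,r_s)$ be $s$ independent uniformly random edges of $G$ with $s\ge c\,m/(\beta^3\sqrt{T})$. Let $Y$ be the number of index pairs $i<j$ such that $\{r_i,r_j\}$ is a wedge, and $Z$ the number of index pairs $i<j$ such that $\{r_i,r_j\}$ is a future-closed wedge. Then $\mathbf{E}[Y]=s(s-1)W/m^2$ and with probability greater than $1-\beta'$, $|Y-\mathbf{E}[Y]|\le\beta'\mathbf{E}[Y]$. Moreover $\mathbf{E}[Z]=s(s-1)T/m^2$ and with probability greater than $1-\beta'$, $|Z-\mathbf{E}[Z]|\le(\beta' W/T)\mathbf{E}[Z]$.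
   Context: A wedge is a path of length 2, i.e. an unordered pair of distinct edges sharing exactly one vertex; $W$ is the number of wedges of $G$. Edges carry their stream positions $e_1,\dots,e_m$. For each triangle of $G$ with edges $e_i,e_j,e_k$, $i<j<k$, the wedge $\{e_i,e_j\}$ is called future-closed; there are exactly $T$ future-closed wedges. *)

From Stdlib Require Import Reals.
From mathcomp Require Import all_boot.
Set Implicit Arguments. Unset Strict Implicit. Unset Printing Implicit Defensive.

Section Defs.
Variable V : finType.

Definition simple_stream (es : seq {set V}) : bool :=
  uniq es && all (fun e : {set V} => #|e| == 2) es.

Definition edge_at (es : seq {set V}) (i : 'I_(size es)) : {set V} :=
  nth set0 es i.

Definition is_wedge (e f : {set V}) : bool := (e != f) && (#|e :&: f| == 1).

Definition is_tri_edges (e f g : {set V}) : bool :=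
  [&& e != f, f != g, e != g & #|e :|: f :|: g| == 3].

Definition num_wedges (es : seq {set V}) : nat :=
  #|[set p : 'I_(size es) * 'I_(size es) |
       (p.1 < p.2) && is_wedge (edge_at p.1) (edge_at p.2)]|.

Definition num_triangles (es : seq {set V}) : nat :=
  #|[set t : {set V} | (#|t| == 3) &&
       [forall e : {set V}, ((e \subset t) && (#|e| == 2)) ==> (e \in es)]]|.

Definition future_closed (es : seq {set V}) (i j : 'I_(size es)) : bool :=
  (i < j) && [exists k : 'I_(size es),
                (j < k) && is_tri_edges (edge_at i) (edge_at j) (edge_at k)].

Definition fc_pair (es : seq {set V}) (a b : 'I_(size es)) : bool :=
  future_closed a b || future_closed b a.

(* samples: s independent uniform edges, encoded by their stream positions *)
Definition sample (es : seq {set V}) (s : nat) := {ffun 'I_s -> 'I_(size es)}.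

Definition Ycount (es : seq {set V}) (s : nat) (r : sample es s) : nat :=
  #|[set p : 'I_s * 'I_s |
       (p.1 < p.2) && is_wedge (edge_at (r p.1)) (edge_at (r p.2))]|.

Definition Zcount (es : seq {set V}) (s : nat) (r : sample es s) : nat :=
  #|[set p : 'I_s * 'I_s | (p.1 < p.2) && fc_pair (r p.1) (r p.2)]|.

Definition expect (es : seq {set V}) (s : nat) (X : sample es s -> nat) : R :=
  Rdiv (INR (\sum_(r : sample es s) X r)) (INR #|{: sample es s}|).

Definition prob (es : seq {set V}) (s : nat) (P : pred (sample es s)) : R :=
  Rdiv (INR #|[set r : sample es s | P r]|) (INR #|{: sample es s}|).

End Defs.

Definition Rleb (x y : R) : bool := if Rle_dec x y then true else false.

From Stdlib Require Import Reals Lra Psatz.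
From mathcomp Require Import all_boot zify.
Set Implicit Arguments. Unset Strict Implicit. Unset Printing Implicit Defensive.

(* Y (resp. Z) counts the
   unordered pairs of sample indices whose edges are related by a symmetric
   irreflexive relation w on positions (being a wedge, resp. a future-closed
   wedge), so 2 Y and 2 Z are "pair statistics".  Counting samples with prescribed values at distinct indices
      gives the mean s (s - 1) A / m^2 of a pair statistic and a bound on its
      second moment through the degree sum A and squared-degree sum D of w.
   2. The graph.  For the wedge relation A = 2 W; the future-closed relation
      is contained in it and has A = 2 T, since future-closed pairs
      correspond bijectively to triangles.  Moreover D <= M A for the maximal
      degree M, and M^2 <= 8 A for wedges (the wedges at an edge form two
      cliques of the wedge relation).
   3. Probability.  Chebyshev's inequality, and the numeric fact that
      s >= 10^6 m / (beta^3 sqrt T) makes the variance small enough. *)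

(* A list cs of (position, value) constraints with distinct
   positions is met by exactly N ^ (S - size cs) samples. *)
Section PrescribedValues.
Variables (S N : nat).
Local Notation sample_space := {ffun 'I_S -> 'I_N}.

Definition agrees (r : sample_space) (cs : seq ('I_S * 'I_N)) : nat :=
  \prod_(c <- cs) (r c.1 == c.2).

Lemma agreesE r cs : agrees r cs = all (fun c => r c.1 == c.2) cs.
Proof.
elim: cs => [|c cs IH]; first by rewrite /agrees big_nil.
by rewrite /agrees big_cons -/(agrees r cs) IH /=; case: (r c.1 == c.2); rewrite ?mul1n ?mul0n.
Qed.

Definition agrees_at (cs : seq ('I_S * 'I_N)) (x : 'I_S) (z : 'I_N) : nat :=
  \prod_(c <- cs) (if x == c.1 then (z == c.2 : nat) else 1).

Lemma agrees_split r cs : agrees r cs = \prod_x agrees_at cs x (r x).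
Proof.
rewrite /agrees /agrees_at exchange_big /=; apply: eq_bigr => c _.
rewrite -big_mkcond /= (eq_bigr (fun x => (r c.1 == c.2 : nat))) ?big_pred1_eq //.
by move=> x /eqP ->.
Qed.

Lemma agrees_at_free cs x : x \notin map fst cs ->
  (forall z, agrees_at cs x z = 1) /\ count (fun c => x == c.1) cs = 0.
Proof.
elim: cs => [|c cs IH] /=; first by split=> // z; rewrite /agrees_at big_nil.
rewrite in_cons negb_or => /andP[/negbTE hc /IH[h1 h2]]; rewrite hc h2.
by split=> // z; rewrite /agrees_at big_cons hc mul1n; apply: h1.
Qed.

Lemma sum_agrees_at cs x : uniq (map fst cs) ->
  (\sum_z agrees_at cs x z) * N ^ count (fun c => x == c.1) cs = N.
Proof.
elim: cs => [_|c cs IH /= /andP[hn hu]].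
  rewrite expn0 muln1 (eq_bigr (fun _ => 1)) ?sum_nat_const ?card_ord ?muln1 //.
  by move=> z _; rewrite /agrees_at big_nil.
case: (eqVneq x c.1) => [->|hx]; last first.
  rewrite add0n -[RHS](IH hu); congr (_ * _); apply: eq_bigr => z _.
  by rewrite /agrees_at big_cons (negbTE hx) mul1n.
have [free cnt0] := agrees_at_free hn.
rewrite cnt0 addn0 expn1 (eq_bigr (fun z => (z == c.2 : nat))); last first.
  by move=> z _; rewrite /agrees_at big_cons eqxx -/(agrees_at cs c.1 z) free muln1.
by rewrite (bigD1 c.2) //= eqxx big1 ?addn0 ?mul1n // => z /negbTE ->.
Qed.

Lemma sum_count_fst (cs : seq ('I_S * 'I_N)) :
  \sum_(x : 'I_S) count (fun c => x == c.1) cs = size cs.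
Proof.
elim: cs => [|c cs IH] /=; first by rewrite big1.
by rewrite big_split /= IH (bigD1 c.1) //= eqxx big1 ?addn0 // => y /negbTE ->.
Qed.

Lemma card_agrees cs : uniq (map fst cs) ->
  (\sum_(r : sample_space) agrees r cs) * N ^ size cs = N ^ S.
Proof.
move=> hu; under eq_bigr do rewrite agrees_split.
rewrite -(@bigA_distr_bigA nat 0 1 muln addn) /= -(sum_count_fst cs) expn_sum.
rewrite -big_split /= (eq_bigr (fun _ => N)) => [|x _]; last exact: sum_agrees_at.
by rewrite prod_nat_const card_ord.
Qed.

Lemma sum_pattern (J : finType) (cs : J -> seq ('I_S * 'I_N)) (pat : sample_space -> J)
    (G : J -> nat) k :
  (forall j, uniq (map fst (cs j))) -> (forall j, size (cs j) = k) ->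
  (forall (r : sample_space) j, all (fun c => r c.1 == c.2) (cs j) = (pat r == j)) ->
  (\sum_(r : sample_space) G (pat r)) * N ^ k = N ^ S * \sum_j G j.
Proof.
move=> hu hk hpat.
have unfold_pat r : G (pat r) = \sum_j agrees r (cs j) * G j.
  rewrite (bigD1 (pat r)) //= big1 => [|j hj]; last by rewrite agreesE hpat eq_sym (negbTE hj).
  by rewrite agreesE hpat eqxx mul1n addn0.
rewrite (eq_bigr _ (fun r _ => unfold_pat r)).
rewrite exchange_big big_distrl big_distrr /=; apply: eq_bigr => j _.
by rewrite -big_distrl /= mulnAC -(hk j) card_agrees // mulnC.
Qed.

End PrescribedValues.

Section PairMoments.
Variables (S N : nat) (w : 'I_N -> 'I_N -> bool).
Local Notation sample_space := {ffun 'I_S -> 'I_N}.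

Definition degree (a : 'I_N) : nat := \sum_b (w a b : nat).
Definition deg_sum : nat := \sum_a degree a.
Definition deg_sq_sum : nat := \sum_a degree a ^ 2.

Definition pair_stat (r : sample_space) : nat :=
  \sum_(p : 'I_S * 'I_S) (w (r p.1) (r p.2) : nat).

Lemma moment_edge i j : i != j ->
  (\sum_(r : sample_space) (w (r i) (r j) : nat)) * N ^ 2 = N ^ S * deg_sum.
Proof.
move=> hij; rewrite /deg_sum /degree pair_bigA.
apply: (@sum_pattern _ _ _ (fun p => [:: (i, p.1); (j, p.2)]) (fun r => (r i, r j))
  (fun p => (w p.1 p.2 : nat))) => [p|//|r [a b]] /=.
  by rewrite inE hij.
by rewrite xpair_eqE !andbT.
Qed.

Lemma moment_star x y z : x != y -> x != z -> y != z ->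
  (\sum_(r : sample_space) (w (r x) (r y) : nat) * w (r x) (r z)) * N ^ 3 =
  N ^ S * deg_sq_sum.
Proof.
move=> hxy hxz hyz.
have -> : deg_sq_sum = \sum_(p : 'I_N * ('I_N * 'I_N)) (w p.1 p.2.1 : nat) * w p.1 p.2.2.
  rewrite /deg_sq_sum -(pair_bigA _ (fun a q => (w a q.1 : nat) * w a q.2)) /=.
  apply: eq_bigr => a _.
  by rewrite -(pair_bigA _ (fun b c => (w a b : nat) * w a c)) -big_distrlr /= mulnn.
apply: (@sum_pattern _ _ _ (fun p => [:: (x, p.1); (y, p.2.1); (z, p.2.2)])
  (fun r => (r x, (r y, r z))) (fun p => (w p.1 p.2.1 : nat) * w p.1 p.2.2))
  => [p|//|r [a [b c]]] /=.
  by rewrite !inE negb_or hxy hxz hyz.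
by rewrite !xpair_eqE !andbT.
Qed.

Lemma moment_disjoint i j k l :
  i != j -> i != k -> i != l -> j != k -> j != l -> k != l ->
  (\sum_(r : sample_space) (w (r i) (r j) : nat) * w (r k) (r l)) * N ^ 4 =
  N ^ S * (deg_sum * deg_sum).
Proof.
move=> h1 h2 h3 h4 h5 h6.
have -> : deg_sum * deg_sum =
    \sum_(p : ('I_N * 'I_N) * ('I_N * 'I_N)) (w p.1.1 p.1.2 : nat) * w p.2.1 p.2.2.
  rewrite -(pair_bigA _ (fun p q => (w p.1 p.2 : nat) * w q.1 q.2)) /=.
  by rewrite -big_distrlr /= /deg_sum /degree pair_bigA.
apply: (@sum_pattern _ _ _ (fun p => [:: (i, p.1.1); (j, p.1.2); (k, p.2.1); (l, p.2.2)])
  (fun r => ((r i, r j), (r k, r l))) (fun p => (w p.1.1 p.1.2 : nat) * w p.2.1 p.2.2))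
  => [p|//|r [[a b] [c d]]] /=.
  by rewrite !inE !negb_or h1 h2 h3 h4 h5 h6.
by rewrite !xpair_eqE !andbT !andbA.
Qed.

End PairMoments.

Section PairVariance.
Variables (S N : nat) (w : 'I_N -> 'I_N -> bool).
Hypothesis w_sym : forall a b, w a b = w b a.
Hypothesis w_irr : forall a, w a a = false.
Local Notation sample_space := {ffun 'I_S -> 'I_N}.
Local Notation A := (deg_sum w).
Local Notation D := (deg_sq_sum w).

Lemma count_other (i : 'I_S) : \sum_j ((i != j) : nat) = S.-1.
Proof.
rewrite (bigD1 i) //= eqxx add0n (eq_bigr (fun _ => 1)) ?sum1_card ?cardC1 ?card_ord //.
by move=> j; rewrite eq_sym => ->.
Qed.

Lemma pair_stat_mean :
  (\sum_(r : sample_space) pair_stat w r) * N ^ 2 = N ^ S * (S * S.-1 * A).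
Proof.
rewrite /pair_stat exchange_big big_distrl /=.
rewrite (eq_bigr (fun p : 'I_S * 'I_S => ((p.1 != p.2) : nat) * (N ^ S * A))) => [|[i j] _];
  last first.
  have [<-|hij] := eqVneq i j; last by rewrite mul1n moment_edge.
  by rewrite mul0n big1 // => r _; rewrite w_irr.
rewrite -big_distrl /= -(pair_bigA _ (fun i j => ((i != j) : nat))) /=.
rewrite (eq_bigr (fun _ => S.-1)) ?sum_nat_const ?card_ord => [|i _]; last exact: count_other.
by rewrite mulnCA mulnA.
Qed.

(* Bound on E[w(r i, r j) w(r k, r l)] * N^4 / N^S according to how the two
   position pairs (i, j) and (k, l) overlap. *)
Definition overlap_bound (p q : 'I_S * 'I_S) : nat :=
  A * A + ((p == q) + (p == (q.2, q.1))) * (A * N ^ 2)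
  + ((q.1 == p.1) + (q.1 == p.2) + (q.2 == p.1) + (q.2 == p.2)) * (D * N).

(* by cases on the coincidences among i, j, k, l, using w_sym to put a shared
   index in the first slot of both factors *)
Lemma moment_pair_le i j k l :
  (\sum_(r : sample_space) (w (r i) (r j) : nat) * w (r k) (r l)) * N ^ 4 <=
  N ^ S * overlap_bound (i, j) (k, l).
Proof.
rewrite /overlap_bound /=.
have [<-|hij] := eqVneq i j; first by rewrite big1 // => r _; rewrite w_irr.
have [<-|hkl] := eqVneq k l; first by rewrite big1 // => r _; rewrite w_irr muln0.
have same_pair : (\sum_(r : sample_space) (w (r i) (r j) : nat)) * N ^ 4 =
    N ^ S * (A * N ^ 2).
  by rewrite (_ : 4 = 2 + 2) // expnD mulnA moment_edge // mulnA.
have star x y z : x != y -> x != z -> y != z ->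
    (\sum_(r : sample_space) (w (r x) (r y) : nat) * w (r x) (r z)) * N ^ 4 =
    N ^ S * (D * N).
  by move=> *; rewrite (expnS N 3) mulnCA moment_star // mulnCA [D * N]mulnC.
have sq (b : bool) : (b : nat) * b = b by case: b.
have [eki|hki] := eqVneq k i; last have [ekj|hkj] := eqVneq k j.
- subst k; have [elj|hlj] := eqVneq l j.
    subst l; under eq_bigr do rewrite sq.
    by rewrite same_pair leq_mul2l; apply/orP; right; rewrite ?eqxx; nia.
  rewrite star //; try by rewrite eq_sym.
  by rewrite leq_mul2l; apply/orP; right; rewrite ?eqxx; nia.
- subst k; have [eli|hli] := eqVneq l i.
    subst l; under eq_bigr => r _ do rewrite [w (r j) _]w_sym sq.
    by rewrite same_pair leq_mul2l; apply/orP; right; rewrite ?eqxx; nia.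
  under eq_bigr do rewrite w_sym.
  rewrite star //; try by rewrite eq_sym.
  by rewrite leq_mul2l; apply/orP; right; rewrite ?eqxx; nia.
- have [eli|hli] := eqVneq l i; last have [elj|hlj] := eqVneq l j.
  + subst l; under eq_bigr => r _ do rewrite [w (r k) _]w_sym.
    rewrite star //; try by rewrite eq_sym.
    by rewrite leq_mul2l; apply/orP; right; rewrite ?eqxx; nia.
  + subst l; under eq_bigr => r _ do rewrite [w (r k) _]w_sym [w (r i) _]w_sym.
    rewrite star //; try by rewrite eq_sym.
    by rewrite leq_mul2l; apply/orP; right; rewrite ?eqxx; nia.
  + rewrite moment_disjoint //; try by rewrite eq_sym.
    by rewrite leq_mul2l; apply/orP; right; nia.
Qed.

Lemma sum_indicator (T : finType) (x : T) : \sum_(y : T) ((y == x) : nat) = 1.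
Proof. by rewrite (bigD1 x) //= eqxx big1 // => y /negbTE ->. Qed.

Lemma count_fst_eq (x : 'I_S) : \sum_(q : 'I_S * 'I_S) ((q.1 == x) : nat) = S.
Proof.
rewrite -(pair_bigA _ (fun a b => ((a == x) : nat))) /=.
under eq_bigr do rewrite sum_nat_const card_ord mulnC.
by rewrite -big_distrl /= sum_indicator mul1n.
Qed.

Lemma count_snd_eq (x : 'I_S) : \sum_(q : 'I_S * 'I_S) ((q.2 == x) : nat) = S.
Proof.
rewrite -(pair_bigA _ (fun a b => ((b == x) : nat))) /=.
under eq_bigr do rewrite sum_indicator.
by rewrite sum_nat_const card_ord muln1.
Qed.

Lemma sum_overlap_bound :
  \sum_p \sum_q overlap_bound p q =
  S ^ 4 * (A * A) + 2 * S ^ 2 * (A * N ^ 2) + 4 * S ^ 3 * (D * N).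
Proof.
have count_swap (p : 'I_S * 'I_S) : \sum_q ((p == (q.2, q.1)) : nat) = 1.
  rewrite -(sum_indicator (p.2, p.1)); apply: eq_bigr => -[a b] _; case: p => c d.
  by rewrite !xpair_eqE /= andbC (eq_sym a) (eq_sym b).
have count_eq (p : 'I_S * 'I_S) : \sum_q ((p == q) : nat) = 1.
  by rewrite -(sum_indicator p); apply: eq_bigr => q _; rewrite eq_sym.
rewrite /overlap_bound.
under eq_bigr do rewrite !big_split /= -!big_distrl /= !big_split /=.
under eq_bigr do rewrite count_eq count_swap !count_fst_eq !count_snd_eq.
rewrite !big_split /= !sum_nat_const !card_prod !card_ord.
rewrite !expnS !expn0 !muln1 -!multE -!plusE; ring.
Qed.

Lemma pair_stat_sq_le :
  (\sum_(r : sample_space) pair_stat w r ^ 2) * N ^ 4 <=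
  N ^ S * (S ^ 4 * (A * A) + 2 * S ^ 2 * (A * N ^ 2) + 4 * S ^ 3 * (D * N)).
Proof.
have -> : \sum_(r : sample_space) pair_stat w r ^ 2 =
    \sum_(p : 'I_S * 'I_S) \sum_(q : 'I_S * 'I_S)
      \sum_(r : sample_space) (w (r p.1) (r p.2) : nat) * w (r q.1) (r q.2).
  under eq_bigr do rewrite /pair_stat -mulnn big_distrlr /=.
  by rewrite exchange_big; apply: eq_bigr => p _; rewrite exchange_big.
rewrite -sum_overlap_bound big_distrr big_distrl /=; apply: leq_sum => -[i j] _.
rewrite big_distrl big_distrr /=; apply: leq_sum => -[k l] _.
exact: moment_pair_le.
Qed.

End PairVariance.

Lemma sum_bool_card (T : finType) (b : pred T) : \sum_(x : T) (b x : nat) = #|[set x | b x]|.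
Proof.
rewrite cardsE -sum1_card [RHS]big_mkcond /=; apply: eq_bigr => x _.
by rewrite unfold_in; case: (b x).
Qed.

Lemma card_increasing_pairs n (f : 'I_n -> 'I_n -> bool) :
  (forall a b, f a b = f b a) -> (forall a, f a a = false) ->
  2 * #|[set p : 'I_n * 'I_n | (p.1 < p.2) && f p.1 p.2]| =
  \sum_(p : 'I_n * 'I_n) (f p.1 p.2 : nat).
Proof.
move=> f_sym f_irr.
rewrite (eq_bigr (fun p : 'I_n * 'I_n =>
  (((p.1 < p.2) && f p.1 p.2) : nat) + (((p.2 < p.1) && f p.2 p.1) : nat))); last first.
  move=> [a b] _ /=; rewrite (f_sym b a); case: (ltngtP a b) => h /=; rewrite ?addn0 //.
  by rewrite (val_inj h) f_irr.
have swap_inj : injective (fun p : 'I_n * 'I_n => (p.2, p.1)) by move=> [? ?] [? ?] [-> ->].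
rewrite big_split /= [X in _ = _ + X](reindex_inj swap_inj) /=.
by rewrite !sum_bool_card mul2n -addnn.
Qed.

Lemma increasing_triple n (P : {set 'I_n}) : 2 < #|P| ->
  exists a b k : 'I_n, [/\ a < b, b < k & [/\ a \in P, b \in P & k \in P]].
Proof.
case/card_gt2P=> x [y [z [[hx hy hz] [hxy hyz hzx]]]].
move: hxy hyz hzx; rewrite -!(inj_eq val_inj) !neq_ltn => /orP[] h1 /orP[] h2 /orP[] h3;
  first [ by exists x, y, z | by exists x, z, y | by exists y, x, z
        | by exists y, z, x | by exists z, x, y | by exists z, y, x | lia ].
Qed.

Section EdgeSets.
Variable V : finType.
Implicit Types e f t : {set V}.

Lemma card_meet_edges e f : #|e| = 2 -> #|f| = 2 -> e != f -> #|e :&: f| <= 1.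
Proof.
move=> he hf; rewrite leqNgt; apply: contraNN => h2.
have eI : e :&: f = e by apply/eqP; rewrite eqEcard subsetIl he.
have fI : e :&: f = f by apply/eqP; rewrite eqEcard subsetIr hf.
by rewrite -{1}eI fI.
Qed.

Lemma card_join_edges e f : #|e| = 2 -> #|f| = 2 -> e != f -> 3 <= #|e :|: f|.
Proof. move=> he hf nef; have := cardsUI e f; have := card_meet_edges he hf nef; lia. Qed.

Lemma common_vertex_wedge e f u :
  #|e| = 2 -> #|f| = 2 -> e != f -> u \in e -> u \in f -> is_wedge e f.
Proof.
move=> he hf nef ue uf; rewrite /is_wedge nef eqn_leq card_meet_edges //=.
by rewrite card_gt0; apply/set0Pn; exists u; rewrite inE ue uf.
Qed.

Lemma card_set3 (T : finType) (x y z : T) :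
  x != y -> y != z -> x != z -> #|[set x; y; z]| = 3.
Proof.
move=> h1 h2 h3; rewrite setUC cardsU1 cards2 h1 !inE negb_or.
by rewrite (eq_sym z x) (eq_sym z y) h2 h3.
Qed.

End EdgeSets.

Section Stream.
Variables (V : finType) (es : seq {set V}).
Hypothesis simple : simple_stream es.
Local Notation N := (size es).
Local Notation e := (@edge_at V es).

Lemma edge_card (a : 'I_N) : #|e a| = 2.
Proof. by case/andP: simple => _ /allP h; apply/eqP/h/mem_nth. Qed.

Lemma edge_at_inj : injective e.
Proof.
move=> a b h; apply/val_inj/eqP; case/andP: simple => hu _.
by rewrite -(nth_uniq set0 (ltn_ord a) (ltn_ord b) hu); apply/eqP.
Qed.

Lemma edge_at_neq (a b : 'I_N) : a != b -> e a != e b.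
Proof. by apply: contra => /eqP /edge_at_inj ->. Qed.

Definition wedge_rel (a b : 'I_N) : bool := is_wedge (e a) (e b).

Lemma wedge_rel_sym a b : wedge_rel a b = wedge_rel b a.
Proof. by rewrite /wedge_rel /is_wedge eq_sym setIC. Qed.

Lemma wedge_rel_irr a : wedge_rel a a = false.
Proof. by rewrite /wedge_rel /is_wedge eqxx. Qed.

Definition fc_rel (a b : 'I_N) : bool := @fc_pair V es a b.

Lemma fc_rel_sym a b : fc_rel a b = fc_rel b a.
Proof. by rewrite /fc_rel /fc_pair orbC. Qed.

Lemma fc_rel_irr a : fc_rel a a = false.
Proof. by rewrite /fc_rel /fc_pair /future_closed ltnn. Qed.

Lemma future_closed_span (a b : 'I_N) : future_closed a b ->
  exists k : 'I_N, [/\ a < b, b < k, #|e a :|: e b| = 3, e k \subset e a :|: e b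
     & [/\ e a != e b, e b != e k & e a != e k]].
Proof.
case/andP=> hab /existsP[k /andP[hbk /and4P[h1 h2 h3 /eqP h4]]].
have ge3 := card_join_edges (edge_card a) (edge_card b) h1.
have span : e a :|: e b :|: e k = e a :|: e b.
  by apply/eqP; rewrite eq_sym eqEcard subsetUl h4 ge3.
exists k; split=> //; first by rewrite -span.
by rewrite -span subsetUr.
Qed.

Lemma future_closed_wedge (a b : 'I_N) : future_closed a b -> wedge_rel a b.
Proof.
case/future_closed_span=> k [_ _ h3 _ [h1 _ _]].
rewrite /wedge_rel /is_wedge h1 /=; have := cardsUI (e a) (e b); rewrite h3 !edge_card; lia.
Qed.

Lemma fc_rel_wedge a b : fc_rel a b -> wedge_rel a b.
Proof. by case/orP => /future_closed_wedge //; rewrite wedge_rel_sym. Qed.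

End Stream.

(* Future-closed pairs of positions correspond bijectively to triangles:
   (a, b) is sent to the vertex set e_a :|: e_b.  Hence there are exactly T of
   them. *)
Section Triangles.
Variables (V : finType) (es : seq {set V}).
Hypothesis simple : simple_stream es.
Local Notation N := (size es).
Local Notation e := (@edge_at V es).

Definition triangles : {set {set V}} := [set t : {set V} | (#|t| == 3) &&
  [forall f : {set V}, ((f \subset t) && (#|f| == 2)) ==> (f \in es)]].

Definition fc_positions : {set 'I_N * 'I_N} := [set p | future_closed p.1 p.2].

Definition span (p : 'I_N * 'I_N) : {set V} := e p.1 :|: e p.2.

Lemma span_edges (a b k : 'I_N) : #|e a :|: e b| = 3 -> e k \subset e a :|: e b ->
  e a != e b -> e b != e k -> e a != e k ->
  [set f : {set V} | f \subset e a :|: e b & #|f| == 2] = [set e a; e b; e k].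
Proof.
move=> h3 hk n1 n2 n3; apply/eqP; rewrite eq_sym eqEcard card_set3 // cards_draws h3 /=.
rewrite andbT; apply/subsetP => x; rewrite !inE => /orP[/orP[]|] /eqP ->;
  by rewrite ?subsetUl ?subsetUr ?hk ?(edge_card simple).
Qed.

Lemma future_closed_positions (a b : 'I_N) : future_closed a b ->
  exists k : 'I_N, [/\ a < b, b < k &
    forall i : 'I_N, (e i \subset e a :|: e b) = (i \in [set a; b; k])].
Proof.
case/(future_closed_span simple)=> k [h1 h2 h3 h4 [n1 n2 n3]]; exists k; split=> // i.
have /setP/(_ (e i)) := span_edges h3 h4 n1 n2 n3.
by rewrite !inE (edge_card simple) eqxx andbT !(inj_eq (edge_at_inj simple)) => ->.
Qed.

(* a triangle determines its first two edges in stream order *)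
Lemma span_inj : {in fc_positions &, injective span}.
Proof.
move=> [p1 p2] [q1 q2]; rewrite !inE /span /= => hp hq same_span.
have [k [lt12 lt2k hk]] := future_closed_positions hp.
have [k' [lt12' lt2k' hk']] := future_closed_positions hq.
have same i : (i \in [set p1; p2; k]) = (i \in [set q1; q2; k']) by rewrite -hk -hk' same_span.
have := same p1; have := same p2; have := same q1; have := same q2.
rewrite !inE !eqxx ?orbT -!(inj_eq (@ord_inj N)) /= => b4 b3 b2 b1.
by congr pair; apply: ord_inj; lia.
Qed.

Lemma card_positions_in (t : {set V}) : t \in triangles ->
  #|[set i : 'I_N | e i \subset t]| = 3.
Proof.
rewrite inE => /andP[/eqP t3 /forallP t_edges].
rewrite -(card_in_imset (f := e)) => [|x y _ _]; last exact: edge_at_inj.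
have -> : [set e i | i in [set i | e i \subset t]] =
          [set f : {set V} | f \subset t & #|f| == 2].
  apply/setP => f; apply/imsetP/idP => [[i]|].
    by rewrite !inE => hi ->; rewrite hi (edge_card simple).
  rewrite inE => hf; have f_es := implyP (t_edges f) hf.
  have f_idx : index f es < N by rewrite index_mem.
  exists (Ordinal f_idx); last by rewrite /edge_at nth_index.
  by rewrite inE /edge_at nth_index //; case/andP: hf.
by rewrite cards_draws t3.
Qed.

(* every triangle is the span of the pair of its two earliest edges *)
Lemma span_image : [set span p | p in fc_positions] = triangles.
Proof.
apply/setP => t; apply/imsetP/idP => [[[a b]]|t_tri].
  rewrite inE /span /= => hab ->.
  have [k [_ _ h3 hk [n1 n2 n3]]] := future_closed_span simple hab.
  rewrite inE h3 eqxx /=; apply/forallP => f; apply/implyP => hf.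
  have : f \in [set e a; e b; e k] by rewrite -(span_edges h3 hk n1 n2 n3) inE.
  by rewrite !inE => /orP[/orP[]|] /eqP ->; apply: mem_nth.
have [|a [b [k [hab hbk]]]] := @increasing_triple _ [set i | e i \subset t].
  by rewrite card_positions_in.
rewrite !inE => -[ha hb hk].
have t3 : #|t| = 3 by move: t_tri; rewrite inE => /andP[/eqP].
have neq (x y : 'I_N) : x < y -> e x != e y.
  by move=> hxy; apply: (edge_at_neq simple); rewrite -(inj_eq (@ord_inj N)) neq_ltn hxy.
have nab := neq _ _ hab; have nbk := neq _ _ hbk; have nak := neq _ _ (ltn_trans hab hbk).
have span_t : e a :|: e b = t.
  apply/eqP; rewrite eqEcard subUset ha hb t3.
  exact: card_join_edges (edge_card simple a) (edge_card simple b) nab.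
exists (a, b) => //; rewrite inE /future_closed /= hab; apply/existsP; exists k.
by rewrite hbk /is_tri_edges nab nbk nak span_t (setUidPl hk) t3.
Qed.

Lemma card_fc_positions : #|fc_positions| = num_triangles es.
Proof. by rewrite -(card_in_imset span_inj) span_image. Qed.

End Triangles.

Section DegreeBounds.
Variables (N : nat) (w : 'I_N -> 'I_N -> bool).

Definition max_degree : nat := \max_a degree w a.

Lemma deg_sum_le : deg_sum w <= N ^ 2.
Proof.
apply: leq_trans (_ : \sum_(a : 'I_N) \sum_(b : 'I_N) 1 <= _).
  by apply: leq_sum => a _; apply: leq_sum => b _; case: (w a b).
by rewrite sum_nat_const card_ord sum_nat_const card_ord muln1 mulnn.
Qed.

Lemma deg_sq_sum_le : deg_sq_sum w <= max_degree * deg_sum w.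
Proof.
rewrite /deg_sq_sum /deg_sum big_distrr /=; apply: leq_sum => a _.
by rewrite -mulnn leq_mul2r (@leq_bigmax _ (degree w) a) orbT.
Qed.

(* a set of pairwise related positions of size k carries k (k - 1) related pairs *)
Lemma clique_bound (B : {set 'I_N}) :
  {in B &, forall b c, b != c -> w b c} -> #|B| * #|B| <= deg_sum w + #|B|.
Proof.
move=> clique.
have inner b : b \in B -> #|B| - 1 <= degree w b.
  move=> hb; apply: leq_trans (_ : #|B :\ b| <= _); first by rewrite (cardsD1 b B) hb add1n subn1.
  rewrite -sum1_card /degree [X in _ <= X](bigID (mem (B :\ b))) /=.
  apply: leq_trans _ (leq_addr _ _).
  by apply: leq_sum => c; rewrite !inE => /andP[hcb hc]; rewrite clique // eq_sym.
have : \sum_(b in B) (#|B| - 1) <= deg_sum w.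
  apply: leq_trans (_ : \sum_(b in B) degree w b <= _); first exact: leq_sum.
  by rewrite /deg_sum [X in _ <= X](bigID (mem B)) leq_addr.
rewrite sum_nat_const mulnBr muln1; lia.
Qed.

End DegreeBounds.

Lemma deg_sums_mono N (w w' : 'I_N -> 'I_N -> bool) : (forall a b, w a b -> w' a b) ->
  deg_sum w <= deg_sum w' /\ deg_sq_sum w <= deg_sq_sum w'.
Proof.
move=> ww'; have deg a : degree w a <= degree w' a.
  by apply: leq_sum => b _; case: (w a b) (ww' a b) => // ->.
by split; apply: leq_sum => a _; rewrite ?leq_exp2r.
Qed.

(* The quantities of the graph expressed through the two relations: the
   degree sums count the wedges and future-closed wedges twice, and the wedge
   degree of an edge is O(sqrt W) since the wedges at an edge {u, v} split
   into two cliques of the wedge relation (the edges through u, resp. v). *)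
Section StreamDegrees.
Variables (V : finType) (es : seq {set V}).
Hypothesis simple : simple_stream es.
Local Notation N := (size es).
Local Notation e := (@edge_at V es).
Local Notation wedge := (@wedge_rel V es).
Local Notation fc := (@fc_rel V es).

Lemma deg_sum_wedge : deg_sum wedge = 2 * num_wedges es.
Proof.
rewrite /deg_sum /degree pair_bigA.
by rewrite -(card_increasing_pairs (@wedge_rel_sym V es) (@wedge_rel_irr V es)).
Qed.

Lemma deg_sum_fc : deg_sum fc = 2 * num_triangles es.
Proof.
rewrite /deg_sum /degree pair_bigA.
rewrite -(card_increasing_pairs (@fc_rel_sym V es) (@fc_rel_irr V es)).
rewrite -(card_fc_positions simple); congr (2 * _); apply: eq_card => p.
rewrite !inE /fc_rel /fc_pair; case: (ltnP p.1 p.2) => h /=.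
  by rewrite {2}/future_closed ltnNge (ltnW h) /= orbF.
by rewrite /future_closed ltnNge h.
Qed.

Lemma wedge_degree_sq (a : 'I_N) : degree wedge a ^ 2 <= 8 * deg_sum wedge.
Proof.
have [u [v [_ eu]]] : exists u v : V, u != v /\ e a = [set u; v].
  by apply/cards2P; rewrite (edge_card simple).
pose through x := [set b : 'I_N | wedge a b && (x \in e b)].
have deg_split : degree wedge a <= #|through u| + #|through v|.
  rewrite /degree sum_bool_card.
  apply: leq_trans (subset_leq_card (_ : _ \subset through u :|: through v)) _;
    last by rewrite cardsU leq_subr.
  apply/subsetP => b; rewrite !inE => hb; rewrite hb /=.
  move: (hb); rewrite /wedge_rel /is_wedge => /andP[_ /eqP h1].
  have /set0Pn[x] : e a :&: e b != set0 by rewrite -card_gt0 h1.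
  by rewrite inE eu !inE => /andP[/orP[] /eqP <- ->] //; rewrite orbT.
have through_clique x : #|through x| * #|through x| <= deg_sum wedge + #|through x|.
  apply: clique_bound => b c; rewrite !inE => /andP[_ xb] /andP[_ xc] bc.
  exact: common_vertex_wedge (edge_card simple b) (edge_card simple c)
    (edge_at_neq simple bc) xb xc.
have through_le x : #|through x| <= deg_sum wedge.
  apply: leq_trans (_ : degree wedge a <= _); last by rewrite /deg_sum (bigD1 a) ?leq_addr.
  by rewrite /degree sum_bool_card subset_leq_card //; apply/subsetP => b; rewrite !inE => /andP[].
have := through_clique u; have := through_clique v; have := through_le u; have := through_le v.
move: deg_split; set d := degree _ a; set x := #|through u|; set y := #|through v|.
move=> /(fun h => leq_mul h h) dd; rewrite -mulnn; nia.
Qed.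

Lemma max_wedge_degree_sq : max_degree wedge ^ 2 <= 8 * deg_sum wedge.
Proof.
rewrite /max_degree; elim/big_ind: _ => // [m n hm hn|a _]; last exact: wedge_degree_sq.
by rewrite /maxn; case: ifP.
Qed.

End StreamDegrees.

Local Open Scope R_scope.

Lemma INR_sum (I : Type) (r : seq I) (F : I -> nat) :
  INR (\sum_(x <- r) F x) = \big[Rplus/0]_(x <- r) INR (F x).
Proof. by elim: r => [|x r IH]; rewrite ?big_nil ?big_cons // plus_INR IH. Qed.

Lemma INR_expn a b : INR (a ^ b)%N = INR a ^ b.
Proof. by elim: b => [|b IH]; rewrite ?expn0 ?expnS ?mult_INR ?IH. Qed.

Lemma Rleb_false x y : Rleb x y = false -> y < x.
Proof. by rewrite /Rleb; case: Rle_dec => // h _; lra. Qed.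

Lemma sum_centered_sq (I : Type) (r : seq I) (f : I -> R) mu :
  \big[Rplus/0]_(x <- r) ((f x - mu) * (f x - mu)) =
  \big[Rplus/0]_(x <- r) (f x * f x) - 2 * mu * \big[Rplus/0]_(x <- r) f x
  + \big[Rplus/0]_(x <- r) 1 * (mu * mu).
Proof. elim: r => [|x r IH]; rewrite ?big_nil ?big_cons /=; [lra | rewrite IH; ring]. Qed.

Lemma markov_count (I : Type) (r : seq I) (g : I -> R) (b : I -> bool) t2 :
  (forall x, 0 <= g x) -> (forall x, b x -> t2 <= g x) ->
  (\big[Rplus/0]_(x <- r) INR (b x)) * t2 <= \big[Rplus/0]_(x <- r) g x.
Proof.
move=> g0 gb; elim: r => [|x r IH]; rewrite ?big_nil ?big_cons /=; first lra.
case hb: (b x) => /=; last by have := g0 x; lra.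
have := gb x hb; lra.
Qed.

Lemma chebyshev_count (T : finType) (X : T -> nat) (t : R) :
  let K := INR #|T| in let mu := INR (\sum_x X x) / K in 0 < K -> 0 < t ->
  INR #|[set x | ~~ Rleb (Rabs (INR (X x) - mu)) t]| * (t * t) <=
  INR (\sum_x (X x * X x)%N) - K * (mu * mu).
Proof.
move=> K mu K0 t0.
have eK : K = \big[Rplus/0]_(x : T) 1 by rewrite /K -sum1_card INR_sum.
have eX : INR (\sum_x X x) = K * mu by rewrite /mu; field; lra.
have eX2 : INR (\sum_x (X x * X x)%N) = \big[Rplus/0]_(x : T) (INR (X x) * INR (X x)).
  by rewrite INR_sum; apply: eq_bigr => x _; rewrite mult_INR.
rewrite -sum_bool_card INR_sum.
apply: Rle_trans (_ : _ <= \big[Rplus/0]_(x : T) ((INR (X x) - mu) * (INR (X x) - mu))) _.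
  apply: markov_count => x; first exact: Rle_0_sqr.
  move/negbTE/Rleb_false => h.
  have : t * t <= Rabs (INR (X x) - mu) * Rabs (INR (X x) - mu) by apply: Rmult_le_compat; lra.
  by rewrite -Rabs_mult Rabs_right //; apply/Rle_ge/Rle_0_sqr.
rewrite sum_centered_sq -INR_sum -eX2 -eK eX; lra.
Qed.

Lemma chebyshev (T : finType) (X : T -> nat) (t bp : R) :
  let K := INR #|T| in let mu := INR (\sum_x X x) / K in 0 < K -> 0 < t ->
  INR (\sum_x (X x * X x)%N) / K - mu * mu < bp * (t * t) ->
  INR #|[set x | Rleb (Rabs (INR (X x) - mu)) t]| / K > 1 - bp.
Proof.
move=> K mu K0 t0 var_lt.
have := chebyshev_count X K0 t0; rewrite -/K -/mu => outliers.
have split_T := cardsC [set x | Rleb (Rabs (INR (X x) - mu)) t].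
have complement : ~: [set x | Rleb (Rabs (INR (X x) - mu)) t] =
    [set x | ~~ Rleb (Rabs (INR (X x) - mu)) t] by apply/setP => x; rewrite !inE.
rewrite complement in split_T.
move: split_T outliers; set good := #|[set x | Rleb _ t]|; set bad := #|[set x | ~~ Rleb _ t]|.
move=> split_T outliers.
have eK : K = INR good + INR bad by rewrite /K -split_T plus_INR.
have var_lt' : INR (\sum_x (X x * X x)%N) - K * (mu * mu) < bp * (t * t) * K.
  have := Rmult_lt_compat_r K _ _ K0 var_lt.
  by have -> : (INR (\sum_x (X x * X x)%N) / K - mu * mu) * K =
    INR (\sum_x (X x * X x)%N) - K * (mu * mu) by field; lra.
have few_bad : INR bad < bp * K.
  by apply: (Rmult_lt_reg_r (t * t)); nra.
apply/Rlt_gt/(Rmult_lt_reg_r K) => //.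
have -> : INR good / K * K = INR good by field; lra.
nra.
Qed.

Lemma pair_stat_moments (N s : nat) (w : 'I_N -> 'I_N -> bool)
  (w_sym : forall a b, w a b = w b a) (w_irr : forall a, w a a = false)
  (X : {ffun 'I_s -> 'I_N} -> nat) (hX : forall r, (2 * X r)%N = pair_stat w r) :
  (0 < N)%N ->
  let K := INR #|{ffun 'I_s -> 'I_N}| in let n := INR N in let S := INR s in
  let A := INR (deg_sum w) in let D := INR (deg_sq_sum w) in
  [/\ 0 < K,
      INR (\sum_r X r) / K = S * INR (s - 1) * (A / 2) / n ^ 2 &
      INR (\sum_r (X r * X r)%N) / K * (4 * n ^ 4) <=
        S ^ 4 * (A * A) + 2 * S ^ 2 * (A * n ^ 2) + 4 * S ^ 3 * (D * n)].
Proof.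
move=> N_pos K n S A D.
have eK : K = n ^ s by rewrite /K card_ffun !card_ord INR_expn.
have n_pos : 0 < n by apply/lt_0_INR/ltP.
have K_pos : 0 < K by rewrite eK; apply: pow_lt.
have sum_X : ((\sum_r X r) * 2 = \sum_(r : {ffun 'I_s -> 'I_N}) pair_stat w r)%N.
  by rewrite big_distrl /=; apply: eq_bigr => r _; rewrite mulnC hX.
have sum_X2 : ((\sum_r (X r * X r)) * 4 =
    \sum_(r : {ffun 'I_s -> 'I_N}) pair_stat w r ^ 2)%N.
  by rewrite big_distrl /=; apply: eq_bigr => r _; rewrite -hX; lia.
have mean := pair_stat_mean s w_irr; have sq := pair_stat_sq_le s w_sym w_irr.
rewrite -sum_X in mean; rewrite -sum_X2 in sq.
split=> //.
  have := f_equal INR mean; rewrite !mult_INR !INR_expn -subn1 -/K -eK -/n -/S -/A /= => e.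
  apply: (Rmult_eq_reg_r (K * n ^ 2)); last by apply/Rgt_not_eq/Rmult_lt_0_compat/pow_lt.
  have -> : INR (\sum_r X r) / K * (K * n ^ 2) = INR (\sum_r X r) * (1 + 1) * (n * n) / 2.
    by field; lra.
  by rewrite e; field; lra.
have := le_INR _ _ (leP sq).
rewrite !mult_INR !plus_INR !mult_INR !INR_expn -/K -eK -/n -/S -/A -/D /= => e.
apply: (Rmult_le_reg_r K) => //.
apply: (Rle_trans _ _ _ (Req_le _ _ _) (Rle_trans _ _ _ e (Req_le _ _ _))); [field; lra | ring].
Qed.

(* the sample size condition forces a > 0 and S > 1, as its left side is positive *)
Lemma size_condition_pos (n S a M bp : R) :
  0 < n -> 1 <= S -> 0 <= a -> 0 <= M ->
  2 * S * a + 2 * (n * n) + 4 * S * M * n < bp ^ 3 * ((S - 1) * (S - 1)) * a ->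
  0 < a /\ 1 < S.
Proof.
move=> n_pos S1 a0 M0 hS.
have SMn : 0 <= S * M * n by apply: Rmult_le_pos; nra.
split.
  have [//|a_eq0] := Rle_lt_or_eq_dec 0 a a0.
  by move: hS; rewrite -a_eq0 !Rmult_0_r; nra.
have [//|S_eq1] := Rle_lt_or_eq_dec 1 S S1.
by move: hS; rewrite -S_eq1 Rminus_diag Rmult_0_l Rmult_0_r Rmult_0_l; nra.
Qed.

(* From the second-moment bound to a small variance: with Ax <= a and
   Dx <= M a, the variance of the pair count (second moment Q, mean mu)
   is below bp * (bp * mu_a)^2, mu_a being the mean computed with a, as
   soon as the sample size condition on S holds. *)
Lemma variance_small (n S Ax a Dx M Q bp : R) :
  0 < n -> 1 <= S -> 0 <= Ax <= a -> 0 <= Dx <= M * a -> 0 <= M -> 0 < bp ->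
  Q * (4 * n ^ 4) <= S ^ 4 * (Ax * Ax) + 2 * S ^ 2 * (Ax * n ^ 2) + 4 * S ^ 3 * (Dx * n) ->
  2 * S * a + 2 * (n * n) + 4 * S * M * n < bp ^ 3 * ((S - 1) * (S - 1)) * a ->
  let mu := S * (S - 1) * (Ax / 2) / n ^ 2 in
  let t := bp * (S * (S - 1) * (a / 2) / n ^ 2) in
  Q - mu * mu < bp * (t * t).
Proof.
move=> n_pos S1 [A0 Aa] [D0 DM] M0 bp0 hQ hS mu t.
have [a_pos _] := size_condition_pos n_pos S1 (Rle_trans _ _ _ A0 Aa) M0 hS.
have n4 : 0 < 4 * n ^ 4 by have := pow_lt n 4 n_pos; lra.
apply: (Rmult_lt_reg_r (4 * n ^ 4)) => //.
have e_mu : mu * mu * (4 * n ^ 4) = (S * (S - 1) * Ax) * (S * (S - 1) * Ax).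
  by rewrite /mu; field; lra.
have e_t : bp * (t * t) * (4 * n ^ 4) = bp ^ 3 * ((S * (S - 1) * a) * (S * (S - 1) * a)).
  by rewrite /t; field; lra.
rewrite Rmult_minus_distr_r e_mu e_t.
have S3 : 0 <= S ^ 3 by apply: pow_le; lra.
have h1 : (S ^ 4 - (S * (S - 1)) * (S * (S - 1))) * (Ax * Ax) <= 2 * S ^ 3 * (a * a).
  have : S ^ 4 - (S * (S - 1)) * (S * (S - 1)) <= 2 * S ^ 3 by simpl; nra.
  have : 0 <= S ^ 4 - (S * (S - 1)) * (S * (S - 1)) by simpl; nra.
  have : Ax * Ax <= a * a by nra.
  nra.
have h2 : 2 * S ^ 2 * (Ax * n ^ 2) <= 2 * S ^ 2 * (a * n ^ 2).
  apply: Rmult_le_compat_l; first by have := pow_le S 2; lra.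
  by apply: Rmult_le_compat_r => //; apply: pow_le; lra.
have h3 : 4 * S ^ 3 * (Dx * n) <= 4 * S ^ 3 * (M * a * n).
  by apply: Rmult_le_compat_l; [lra | apply: Rmult_le_compat_r; lra].
have h4 : (S * S * a) * (2 * S * a + 2 * (n * n) + 4 * S * M * n) <
          (S * S * a) * (bp ^ 3 * ((S - 1) * (S - 1)) * a).
  by apply: Rmult_lt_compat_l => //; apply: Rmult_lt_0_compat => //; nra.
have e3 : (S * S * a) * (2 * S * a + 2 * (n * n) + 4 * S * M * n) =
   2 * S ^ 3 * (a * a) + 2 * S ^ 2 * (a * n ^ 2) + 4 * S ^ 3 * (M * a * n) by ring.
have e4 : S ^ 4 * (Ax * Ax) - (S * (S - 1) * Ax) * (S * (S - 1) * Ax) =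
   (S ^ 4 - (S * (S - 1)) * (S * (S - 1))) * (Ax * Ax) by ring.
have e5 : (S * S * a) * (bp ^ 3 * ((S - 1) * (S - 1)) * a) =
   bp ^ 3 * ((S * (S - 1) * a) * (S * (S - 1) * a)) by ring.
lra.
Qed.

Lemma sqr_le_cancel x y : 0 <= x -> 0 <= y -> y * y <= x * x -> y <= x.
Proof. by move=> hx hy h; case: (Rle_lt_dec y x) => // h'; nra. Qed.

(* The numeric content of the sample size bound S >= 10^6 n / (B u), where
   B = beta^3, u = sqrt T, a = 2 W >= 2 u^2, n = m >= sqrt a and the maximal
   wedge degree M satisfies M^2 <= 8 a: S is large, and each of the three
   error terms of the variance is at most B S^2 a / 1000. *)
Section SampleSize.
Variables (n S B u a M : R).
Hypotheses (B_range : 0 < B <= 1) (u_ge1 : 1 <= u) (a_ge : 2 * (u * u) <= a)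
  (a_le : a <= n * n) (M_sq : M * M <= 8 * a) (M_ge0 : 0 <= M) (n_pos : 0 < n)
  (S_ge : 1000000 * n <= S * (B * u)).

Lemma u_le_n : u <= n.
Proof. by apply: sqr_le_cancel; nra. Qed.

Lemma sample_size_large : 1000000 <= S.
Proof. have un := u_le_n; have SB : 1000000 <= S * B by nra. nra. Qed.

Lemma sample_size_suffices :
  2 * S * a + 2 * (n * n) + 4 * S * M * n < B / 125 * ((S - 1) * (S - 1)) * a.
Proof.
have un := u_le_n; have S_large := sample_size_large.
have SB : 1000000 <= S * B by nra.
have a2 : 2 <= a by nra.
have term1 : 2 * S * a <= B * (S * S) * a / 1000.
  have : 0 <= (S * B - 2000) * (S * a) by apply: Rmult_le_pos; nra.
  nra.
have BSu : (1000000 * n) * (1000000 * n) <= (S * (B * u)) * (S * (B * u)) by nra.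
have term2 : 2 * (n * n) <= B * (S * S) * a / 1000.
  have h1 : B * (S * S) * (2 * (u * u)) <= B * (S * S) * a.
    by apply: Rmult_le_compat_l => //; nra.
  have h2 : (B * B) * (2 * (S * S) * (u * u)) <= B * (2 * (S * S) * (u * u)).
    by apply: Rmult_le_compat_r; nra.
  nra.
have term3 : 4 * S * M * n <= B * (S * S) * a / 1000.
  have sq : (4000 * M * n) * (4000 * M * n) <= (B * S * a) * (B * S * a).
    have h0 : 2 * ((1000000 * n) * (1000000 * n)) <= B * B * (S * S) * a.
      have : (B * B * (S * S)) * (2 * (u * u)) <= (B * B * (S * S)) * a.
        by apply: Rmult_le_compat_l => //; nra.
      nra.
    have h1 : 2 * ((1000000 * n) * (1000000 * n)) * a <= (B * B * (S * S) * a) * a.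
      by apply: Rmult_le_compat_r; nra.
    have h2 : (M * M) * (n * n) <= (8 * a) * (n * n) by apply: Rmult_le_compat_r; nra.
    nra.
  have : 4000 * M * n <= B * S * a by apply: sqr_le_cancel; nra.
  nra.
have : B * (S * S) * a / 250 <= B / 125 * ((S - 1) * (S - 1)) * a by nra.
have : 0 < B * (S * S) * a by nra.
lra.
Qed.

End SampleSize.

Lemma pair_count_concentration (V : finType) (es : seq {set V}) (s : nat)
  (w : 'I_(size es) -> 'I_(size es) -> bool)
  (w_sym : forall a b, w a b = w b a) (w_irr : forall a, w a a = false)
  (X : sample es s -> nat) (hX : forall r, (2 * X r)%N = pair_stat w r) (a M bp : R) :
  let m := INR (size es) in let S := INR s in
  (0 < size es)%N -> (1 <= s)%N ->
  INR (deg_sum w) <= a -> INR (deg_sq_sum w) <= M * a -> 0 <= M -> 0 < bp ->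
  2 * S * a + 2 * (m * m) + 4 * S * M * m < bp ^ 3 * ((S - 1) * (S - 1)) * a ->
  expect X = S * INR (s - 1) * (INR (deg_sum w) / 2) / m ^ 2 /\
  forall t, t = bp * (S * INR (s - 1) * (a / 2) / m ^ 2) ->
    prob (fun r => Rleb (Rabs (INR (X r) - expect X)) t) > 1 - bp.
Proof.
move=> m S m_pos s_pos A_le D_le M_ge0 bp_pos size_cond.
have [K_pos mean sq] := pair_stat_moments w_sym w_irr hX m_pos.
have S1 : INR (s - 1) = S - 1 by rewrite minus_INR //; apply/leP.
have m0 : 0 < m by apply/lt_0_INR/ltP.
have S_ge1 : 1 <= S by apply: (le_INR 1); apply/leP.
split=> // t ->; rewrite S1.
have A0 := pos_INR (deg_sum w); have D0 := pos_INR (deg_sq_sum w).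
have [a_pos S_gt1] := size_condition_pos m0 S_ge1 (Rle_trans _ _ _ A0 A_le) M_ge0 size_cond.
have mean_pos : 0 < S * (S - 1) * (a / 2) / m ^ 2.
  apply: Rdiv_lt_0_compat; last exact: pow_lt.
  by apply: Rmult_lt_0_compat; nra.
apply: chebyshev => //; first exact: Rmult_lt_0_compat.
rewrite mean S1.
exact: (variance_small m0 S_ge1 (conj A0 A_le) (conj D0 D_le) M_ge0 bp_pos sq size_cond).
Qed.

Lemma Ycount_pair_stat (V : finType) (es : seq {set V}) (s : nat) (r : sample es s) :
  (2 * Ycount r)%N = pair_stat (@wedge_rel V es) r.
Proof.
exact: (card_increasing_pairs (f := fun i j => wedge_rel (r i) (r j)))
  (fun _ _ => wedge_rel_sym _ _) (fun _ => wedge_rel_irr _).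
Qed.

Lemma Zcount_pair_stat (V : finType) (es : seq {set V}) (s : nat) (r : sample es s) :
  (2 * Zcount r)%N = pair_stat (@fc_rel V es) r.
Proof.
exact: (card_increasing_pairs (f := fun i j => fc_rel (r i) (r j)))
  (fun _ _ => fc_rel_sym _ _) (fun _ => fc_rel_irr _).
Qed.

Lemma stream_sample_size (V : finType) (es : seq {set V}) (beta : R) (s : nat) :
  simple_stream es -> (1 <= num_triangles es)%N -> 0 < beta < 1 ->
  INR s >= 1000000 * INR (size es) / (beta ^ 3 * sqrt (INR (num_triangles es))) ->
  let m := INR (size es) in let S := INR s in
  let a := INR (deg_sum (@wedge_rel V es)) in let M := INR (max_degree (@wedge_rel V es)) in
  [/\ (0 < size es)%N, (1 <= s)%N &
      2 * S * a + 2 * (m * m) + 4 * S * M * m < (beta / 5) ^ 3 * ((S - 1) * (S - 1)) * a].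
Proof.
move=> simple T_ge1 beta_range s_large m S a M.
set T := INR (num_triangles es); set u := sqrt T; set B := beta ^ 3.
have T1 : 1 <= T by apply: (le_INR 1); apply/leP.
have uu : u * u = T by rewrite /u sqrt_sqrt //; lra.
have u1 : 1 <= u by rewrite /u -sqrt_1; apply: sqrt_le_1_alt.
have B_range : 0 < B <= 1.
  split; first by apply: pow_lt; lra.
  by rewrite -(pow1 3); apply: pow_incr; lra.
have a_ge : 2 * (u * u) <= a.
  have [fc_le _] := deg_sums_mono (@fc_rel_wedge V es simple).
  have : (2 * num_triangles es <= deg_sum (@wedge_rel V es))%N by rewrite -deg_sum_fc.
  by move/leP/le_INR; rewrite mult_INR uu (_ : INR 2 = 2) //; simpl; lra.
have a_le : a <= m * m.
  by rewrite -mult_INR; apply/le_INR/leP; rewrite multE mulnn deg_sum_le.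
have M_sq : M * M <= 8 * a.
  have := max_wedge_degree_sq simple; rewrite -mulnn => /leP/le_INR.
  by rewrite !mult_INR (_ : INR 8 = 8) //; simpl; lra.
have m0 : 0 < m by have := pos_INR (size es); rewrite -/m; nra.
have m_pos : (0 < size es)%N by apply/ltP/INR_lt.
have S_ge : 1000000 * m <= S * (B * u).
  have Bu : 0 < B * u by nra.
  have : 1000000 * m / (B * u) <= S by move: s_large; rewrite -/T -/u -/B -/m -/S; lra.
  move/(Rmult_le_compat_r (B * u) _ _ (Rlt_le _ _ Bu)).
  by rewrite /Rdiv Rmult_assoc Rinv_l ?Rmult_1_r //; lra.
have M0 : 0 <= M := pos_INR _.
have S_large := sample_size_large B_range u1 a_ge a_le m0 S_ge.
split=> //; first by apply/leP/INR_le; rewrite -/S /=; lra.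
have -> : (beta / 5) ^ 3 = B / 125 by rewrite /B /=; field.
exact: (sample_size_suffices B_range u1 a_ge a_le M_sq M0 m0 S_ge).
Qed.

Theorem mainTheorem8 :
  exists c : R,
  forall (V : finType) (es : seq {set V}) (beta : R) (s : nat),
    simple_stream es ->
    (size es <= num_wedges es)%N ->
    (1 <= num_triangles es)%N ->
    0 < beta < 1 ->
    INR s >= c * INR (size es) / (beta ^ 3 * sqrt (INR (num_triangles es))) ->
    let beta' := beta / 5 in
    let m := INR (size es) in
    let W := INR (num_wedges es) in
    let T := INR (num_triangles es) in
    let EY := expect (@Ycount V es s) in
    let EZ := expect (@Zcount V es s) in
    EY = INR s * INR (s - 1) * W / m ^ 2 /\
    prob (fun r : sample es s => Rleb (Rabs (INR (Ycount r) - EY)) (beta' * EY)) > 1 - beta' /\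
    EZ = INR s * INR (s - 1) * T / m ^ 2 /\
    prob (fun r : sample es s => Rleb (Rabs (INR (Zcount r) - EZ)) ((beta' * W / T) * EZ))
      > 1 - beta'.
Proof.
exists 1000000 => V es beta s simple _ T_ge1 beta_range s_large beta' m W T EY EZ.
have [m_pos s_pos size_cond] := stream_sample_size simple T_ge1 beta_range s_large.
have bp_pos : 0 < beta' by rewrite /beta'; lra.
have [fc_le fc_sq_le] := deg_sums_mono (@fc_rel_wedge V es simple).
have D_le : INR (deg_sq_sum (@wedge_rel V es)) <=
    INR (max_degree (@wedge_rel V es)) * INR (deg_sum (@wedge_rel V es)).
  by rewrite -mult_INR; apply/le_INR/leP/deg_sq_sum_le.
have [EY_val Y_conc] := pair_count_concentration (@wedge_rel_sym V es) (@wedge_rel_irr V es)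
  (@Ycount_pair_stat V es s) m_pos s_pos (Rle_refl _) D_le (pos_INR _) bp_pos size_cond.
have [EZ_val Z_conc] := pair_count_concentration (@fc_rel_sym V es) (@fc_rel_irr V es)
  (@Zcount_pair_stat V es s) m_pos s_pos (le_INR _ _ (leP fc_le))
  (Rle_trans _ _ _ (le_INR _ _ (leP fc_sq_le)) D_le) (pos_INR _) bp_pos size_cond.
have m0 : 0 < m by apply/lt_0_INR/ltP.
have T0 : 0 < T by apply/lt_0_INR/ltP.
have two : INR 2 = 2 by simpl; lra.
rewrite deg_sum_wedge mult_INR two -/W -/m in EY_val Y_conc Z_conc.
rewrite (deg_sum_fc simple) mult_INR two -/T -/m in EZ_val.
split; [|split; [|split]].
- by rewrite /EY EY_val; field; lra.
- by apply: Y_conc; rewrite /EY EY_val.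
- by rewrite /EZ EZ_val; field; lra.
- by apply: Z_conc; rewrite /EZ EZ_val /Rdiv; field; lra.
Qed.
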